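(* A finite group is pseudo-nilpotent if and only if it is nilpotent.
   Context: For a semigroup $S$, $S^1$ denotes $S$ with an identity adjoined (if $S$ has none). For $x,y\in S$ and $z_1,z_2,\ldots\in S^1$ define recursively $\lambda_0=x$, $\rho_0=y$, $\lambda_{n+1}=\lambda_n z_{n+1}\rho_n$, $\rho_{n+1}=\rho_n z_{n+1}\lambda_n$; write $\lambda_n(x,y,z_1,\ldots,z_n)$ and $\rho_n(x,y,z_1,\ldots,z_n)$. A semigroup $S$ is nilpotent (in the sense of Mal'cev) if there is a positive integer $n$ with $\lambda_n(a,b,c_1,\ldots,c_n)=\rho_n(a,b,c_1,\ldots,c_n)$ for all $a,b\in S$ and $c_1,\ldots,c_n\in S^1$ (for groups this coincides with the usual notion of nilpotency). $\langle X\rangle$ denotes the subsemigroup generated by $X$. The upper non-nilpotent graph $\mathcal{N}_S$ has vertex set $S$, with an edge between $x$ and $y$ iff $\langle x,y\rangle$ is not nilpotent. The empty set is regarded as an ideal; for an ideal $I$ of $S$, $S/I$ is the Rees factor semigroup, with $S/\emptyset=S$. A semigroup $S$ is pseudo-nilpotent if the following holds: whenever $x,y\in S$, $w_1,\ldots,w_m\in S^1$, $T$ is the subsemigroup generated by $x,y$ and those $w_i$ lying in $S$, $I$ is an ideal (possibly empty) of $T$, and $t<m$ are non-negative integers such that, writing $\lambda_k=\lambda_k(x,y,w_1,\ldots,w_k)$ and $\rho_k=\rho_k(x,y,w_1,\ldots,w_k)$, one has $\lambda_t\neq\rho_t$, $(\lambda_t,\rho_t)=(\lambda_m,\rho_m)$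 and $\lambda_m,\rho_m\notin I$, then for every $0\le i\le m$ there is an edge in $\mathcal{N}_{T/I}$ between (the images of) $\lambda_i$ and $\rho_i$. *)

From mathcomp Require Import all_boot all_fingroup all_solvable.
Set Implicit Arguments. Unset Strict Implicit. Unset Printing Implicit Defensive.

(* multiplication l * c * r where c ranges over S^1: None = adjoined identity *)
Definition mul3 (A : Type) (op : A -> A -> A) (l : A) (c : option A) (r : A) : A :=
  match c with None => op l r | Some z => op (op l z) r end.

(* lr op x y c n = (lambda_n(x,y,c_1..c_n), rho_n(x,y,c_1..c_n)) *)
Fixpoint lr (A : Type) (op : A -> A -> A) (x y : A) (c : nat -> option A) (n : nat)
  : A * A :=
  match n with
  | 0 => (x, y)
  | k.+1 => let p := lr op x y c k in
            (mul3 op p.1 (c k.+1) p.2, mul3 op p.2 (c k.+1) p.1)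
  end.

Inductive gen (A : Type) (op : A -> A -> A) (X : A -> Prop) : A -> Prop :=
  | gen_base a : X a -> gen op X a
  | gen_op a b : gen op X a -> gen op X b -> gen op X (op a b).

Definition malcev_nilpotent (A : Type) (op : A -> A -> A) (U : A -> Prop) : Prop :=
  exists n : nat, 0 < n /\
    forall a b : A, U a -> U b ->
    forall c : nat -> option A, (forall i z, c i = Some z -> U z) ->
      (lr op a b c n).1 = (lr op a b c n).2.

(* Rees factor T/I, modelled in option gT: None is the zero (the class I),
   Some t stands for t in T \ I. *)
Section Rees.
Variable gT : finGroupType.
Definition rees_mul (I : {set gT}) (u v : option gT) : option gT :=
  match u, v with
  | Some a, Some b => if (a * b)%g \in I then None else Some (a * b)%g
  | _, _ => None
  end.
Definition rees_img (I : {set gT}) (t : gT) : option gT :=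
  if t \in I then None else Some t.
End Rees.

Definition rees_edge (gT : finGroupType) (I : {set gT}) (u v : gT) : Prop :=
  ~ malcev_nilpotent (rees_mul I)
      (gen (rees_mul I) (fun z => z = rees_img I u \/ z = rees_img I v)).

(* I is an ideal (possibly empty) of the subsemigroup T *)
Definition is_ideal (gT : finGroupType) (T : gT -> Prop) (I : {set gT}) : Prop :=
  (forall z, z \in I -> T z) /\
  (forall t z, T t -> z \in I -> (t * z)%g \in I /\ (z * t)%g \in I).

(* Pseudo-nilpotency of the group G viewed as a semigroup; since G has an
   identity, G^1 = G, so all w_i lie in G. *)
Definition pseudo_nilpotent (gT : finGroupType) (G : {set gT}) : Prop :=
  forall x y : gT, x \in G -> y \in G ->
  forall (m : nat) (w : nat -> gT), (forall i, 1 <= i <= m -> w i \in G) ->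
  let T := gen (@mulg gT)
             (fun z => z = x \/ z = y \/ exists2 i, 1 <= i <= m & z = w i) in
  let LR := lr (@mulg gT) x y (fun i => Some (w i)) in
  forall I : {set gT}, is_ideal T I ->
  forall t : nat, t < m ->
    (LR t).1 <> (LR t).2 ->
    LR t = LR m ->
    (LR m).1 \notin I -> (LR m).2 \notin I ->
    forall i, i <= m -> rees_edge I (LR i).1 (LR i).2.

From mathcomp Require Import all_boot all_fingroup all_solvable.

Set Implicit Arguments. Unset Strict Implicit. Unset Printing Implicit Defensive.

(* In a group, the quotient d_n := rho_n^-1 lambda_n of the Mal'cev sequence
   satisfies d_(n+1) = [d_n, w_(n+1) rho_n], so d_n drops one step down the
   lower central series at each step, and conversely any element outside
   Z_k(G) can be pushed through k such commutators without reaching 1.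
   Hence in a nilpotent group a cycle (lambda_t, rho_t) = (lambda_m, rho_m)
   with t < m forces lambda_t = rho_t, so pseudo-nilpotency holds vacuously.
   If G is not nilpotent, some a lies outside Z_N(G) with N = |G x G|; the
   sequence started at (a, 1) stays off the diagonal for N + 1 steps and so
   revisits a pair, and pseudo-nilpotency with the empty ideal would then give
   an edge between a and 1, which generate a commutative, hence Mal'cev
   nilpotent, subsemigroup. *)

Section MalcevSequence.
Variables (A : Type) (op : A -> A -> A).

Lemma lrS (x y : A) (c : nat -> option A) n :
  lr op x y c n.+1 = let p := lr op x y c n in
                     (mul3 op p.1 (c n.+1) p.2, mul3 op p.2 (c n.+1) p.1).
Proof. by []. Qed.

Lemma lr_shift (x y : A) (c : nat -> option A) n :
  lr op x y c n.+1 =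
  lr op (mul3 op x (c 1) y) (mul3 op y (c 1) x) (fun i => c i.+1) n.
Proof. by elim: n => [|n IHn] //; rewrite lrS IHn. Qed.

Lemma eq_lr (x y : A) (c c' : nat -> option A) n :
  {in [pred i | 0 < i], c =1 c'} -> lr op x y c n = lr op x y c' n.
Proof. by move=> eq_c; elim: n => [|n IHn] //=; rewrite IHn eq_c. Qed.

Hypothesis opA : associative op.

Lemma gen_comm (X : A -> Prop) :
  (forall u v, X u -> X v -> op u v = op v u) ->
  forall u v, gen op X u -> gen op X v -> op u v = op v u.
Proof.
move=> commX u v gu; elim: v / => [v Xv | a b _ IHa _ IHb].
  elim: u / gu => [u Xu | a b _ IHa _ IHb]; first exact: commX.
  by rewrite -opA IHb opA IHa -opA.
by rewrite opA IHa -!opA IHb.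
Qed.

Lemma malcev_nilpotent_comm (U : A -> Prop) :
  (forall u v, U u -> U v -> op u v = op v u) -> malcev_nilpotent op U.
Proof.
move=> commU; exists 1; split=> // a b Ua Ub c Uc /=.
case Ec: (c 1) => [z|] /=; last exact: commU.
have Uz := Uc _ _ Ec.
by rewrite -!opA (commU z b) // !opA (commU a b) // -!opA (commU z a).
Qed.

End MalcevSequence.

Lemma rees_mul0A (gT : finGroupType) : associative (@rees_mul gT set0).
Proof. by case=> [a|] [b|] [c|] //; rewrite /rees_mul !in_set0 /= ?mulgA. Qed.

Lemma commute_rees_edge0 (gT : finGroupType) (u v : gT) :
  commute u v -> ~ rees_edge set0 u v.
Proof.
move=> cuv; apply; apply/(malcev_nilpotent_comm (@rees_mul0A gT)).
apply/(gen_comm (@rees_mul0A gT)).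
by move=> p q [|] -> [|] ->; rewrite /rees_img /rees_mul !in_set0 /= ?cuv.
Qed.

Lemma is_ideal_set0 (gT : finGroupType) (T : gT -> Prop) : is_ideal T set0.
Proof. by split=> [z|t z _]; rewrite in_set0. Qed.

Lemma exists_repeat (T : finType) (f : nat -> T) :
  exists i j, [/\ i < j, j <= #|T| & f i = f j].
Proof.
pose g (i : 'I_#|T|.+1) := f i.
have /injectivePn [i [j neq_ji eq_g]] : ~~ injectiveb g.
  by apply/negP => /injectiveP /leq_card; rewrite card_ord ltnn.
have le_ord (k : 'I_#|T|.+1) : k <= #|T| by rewrite -ltnS.
case: (ltngtP i j) => [lt_ij | lt_ji | /val_inj eq_ij].
- by exists i, j; split.
- by exists j, i; split.
- by rewrite eq_ij eqxx in neq_ji.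
Qed.

Open Scope group_scope.

Section GroupMalcevSequence.
Variables (gT : finGroupType) (G : {group gT}).

Definition lrg (x y : gT) (w : nat -> gT) := lr *%g x y (fun i => Some (w i)).

Definition lr_delta x y w n := (lrg x y w n).2^-1 * (lrg x y w n).1.

Lemma lr_deltaS x y w n :
  lr_delta x y w n.+1 = [~ lr_delta x y w n, w n.+1 * (lrg x y w n).2].
Proof. by rewrite /lr_delta /= commgEl /conjg !invMg !invgK !mulgA mulgK. Qed.

Lemma lr_delta_eq1 x y w n :
  (lr_delta x y w n == 1) = ((lrg x y w n).1 == (lrg x y w n).2).
Proof. by rewrite -eq_mulVg1 eq_sym. Qed.

Variables (x y : gT) (w : nat -> gT) (m : nat).
Hypotheses (xG : x \in G) (yG : y \in G).
Hypothesis wG : forall i, 0 < i <= m -> w i \in G.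

Lemma lrg_mem n : n <= m -> (lrg x y w n).1 \in G /\ (lrg x y w n).2 \in G.
Proof.
elim: n => [|n IHn] le_nm //=; have [lG rG] := IHn (ltnW le_nm).
by rewrite !groupM ?wG.
Qed.

Lemma lr_delta_lcn s k j : s + j <= m ->
  lr_delta x y w s \in 'L_k.+1(G) ->
  lr_delta x y w (s + j) \in 'L_(k + j).+1(G).
Proof.
move=> le_m Ls; elim: j le_m => [|j IHj] le_m; first by rewrite !addn0.
rewrite !addnS in le_m *.
rewrite lcnSn lr_deltaS mem_commg ?IHj ?(ltnW le_m) //.
by have [_ rG] := lrg_mem (ltnW le_m); rewrite groupM ?wG.
Qed.

Lemma nilpotent_lr_cycle t : nilpotent G -> t < m ->
  lrg x y w t = lrg x y w m -> (lrg x y w t).1 = (lrg x y w t).2.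
Proof.
move=> nilG lt_tm cycle; apply/eqP; rewrite -lr_delta_eq1.
have delta_lcn k : lr_delta x y w t \in 'L_k.+1(G).
  elim: k => [|k IHk].
    by have [lG rG] := lrg_mem (ltnW lt_tm); rewrite lcn1 groupM ?groupV.
  have le_k : k.+2 <= (k + (m - t)).+1.
    by rewrite ltnS -addn1 leq_add2l subn_gt0.
  have := lr_delta_lcn (j := m - t) _ IHk; rewrite subnKC ?(ltnW lt_tm) //.
  by rewrite /lr_delta -cycle => /(_ (leqnn m)) /(subsetP (lcn_sub_leq G le_k)).
have [n Ln1] := lcnP _ nilG.
by have := delta_lcn n; rewrite Ln1 => /set1P->.
Qed.

End GroupMalcevSequence.

Lemma exists_lr_distinct (gT : finGroupType) (G : {group gT}) k :
  forall x y, x \in G -> y \in G -> y^-1 * x \notin 'Z_k(G) ->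
  exists2 w : nat -> gT, forall i, w i \in G &
    forall i, i <= k -> (lrg x y w i).1 != (lrg x y w i).2.
Proof.
have neq_xy x y n : y^-1 * x \notin 'Z_n(G) -> x != y.
  by apply: contra => /eqP->; rewrite mulVg group1.
elim: k => [|k IHk] x y xG yG notZ.
  by exists (fun=> 1) => [i | [|]] //; rewrite ?group1 ?(neq_xy _ _ _ notZ).
have dG : y^-1 * x \in G by rewrite groupM ?groupV.
have : ~~ (commg_set [set y^-1 * x] G \subset 'Z_k(G)).
  by apply: contra notZ => sZ; rewrite ucnSnR inE dG /= /commutator gen_subG.
case/subsetPn => _ /imset2P [_ g /set1P-> gG ->] notZk.
pose w1 := g * y^-1.
have w1G : w1 \in G by rewrite groupM ?groupV.
(* with w_1 = g y^-1 the first step turns d_0 = y^-1 x into [d_0, g] *)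
have d1 : (y * w1 * x)^-1 * (x * w1 * y) = [~ y^-1 * x, g].
  by rewrite commgEl /conjg /w1 !invMg !invgK !mulgA mulgKV.
have [|w' w'G neq_w'] := IHk (x * w1 * y) (y * w1 * x)
  (groupM (groupM xG w1G) yG) (groupM (groupM yG w1G) xG); first by rewrite d1.
exists (fun i => if i is i'.+2 then w' i'.+1 else w1) => [[|[|i]] //|].
case=> [_ | i le_ik].
- exact: neq_xy notZ.
- rewrite /lrg lr_shift (@eq_lr _ _ _ _ _ (fun i => Some (w' i))) => [|[]//].
  exact: neq_w'.
Qed.

Theorem lemma2p5 (gT : finGroupType) (G : {group gT}) :
  pseudo_nilpotent G <-> nilpotent G.
Proof.
split=> [pnG | nilG x y xG yG m w wG T LR I _ t lt_tm neq_t cycle]; last first.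
  by case: neq_t; apply: (nilpotent_lr_cycle xG yG wG nilG lt_tm cycle).
apply/ucnP; exists #|{: gT * gT}|; apply/eqP; rewrite eqEsubset ucn_sub /=.
apply/subsetP => a aG; apply: contraT => notZa; exfalso.
have notZa1 : 1^-1 * a \notin 'Z_#|{: gT * gT}|(G) by rewrite invg1 mul1g.
have [w wG neq_lr] := exists_lr_distinct aG (group1 G) notZa1.
have [i [j [lt_ij le_jN cycle]]] := exists_repeat (lrg a 1 w).
have neq_i : (lrg a 1 w i).1 <> (lrg a 1 w i).2.
  by apply/eqP/neq_lr/(leq_trans (ltnW lt_ij)).
have := pnG a 1 aG (group1 G) j w (fun k _ => wG k) set0 (is_ideal_set0 _).
move=> /(_ i lt_ij neq_i cycle); rewrite !in_set0 => /(_ isT isT 0 (leq0n _)).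
exact/commute_rees_edge0/commute1.
Qed.
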